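(* Let $x_1,\dots,x_n\in\mathbb{R}^2$ satisfy $x_i\prec x_j$ whenever $i<j$, and let $p\ge 2$. For $k\in\{2,\dots,p\}$ and $i\in\{k,\dots,n\}$, let $C^{MSN}_{k,i}$ be the optimal value of the Max-Sum-Neighbor $k$-dispersion problem among the points $x_1,\dots,x_i$, i.e. $C^{MSN}_{k,i}=\max_{1\le i_1<\dots<i_k\le i}\sum_{j=1}^{k-1}d_{i_j,i_{j+1}}$. Then $C^{MSN}_{2,i}=d_{1,i}$ for all $i\in\{2,\dots,n\}$, and for all $k\in\{3,\dots,p\}$ and $i\in\{k,\dots,n\}$, $$C^{MSN}_{k,i}=\max_{j\in\{k-1,\dots,i-1\}}\left(C^{MSN}_{k-1,j}+d_{j,i}\right).$$
   Context: For $y=(y^1,y^2),z=(z^1,z^2)\in\mathbb{R}^2$ write $y\prec z$ iff $y^1<z^1$ and $y^2>z^2$. Fix $\alpha>0$, let $d$ be the Euclidean distance, and set $d_{ij}=d(x_i,x_j)^\alpha$. *)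

(* R : realType, Euclidean distance via Num.sqrt,
   real exponent via powR (with 0 `^ a = 0 for a <> 0). *)
From HB Require Import structures.
From mathcomp Require Import all_boot all_order all_algebra.
From mathcomp Require Import all_classical all_reals all_analysis.
Set Implicit Arguments. Unset Strict Implicit. Unset Printing Implicit Defensive.
Import Order.TTheory GRing.Theory Num.Theory.
Local Open Scope ring_scope.

Definition prec (R : realType) (y z : R * R) : Prop := y.1 < z.1 /\ y.2 > z.2.

Definition edist (R : realType) (y z : R * R) : R :=
  Num.sqrt ((y.1 - z.1) ^+ 2 + (y.2 - z.2) ^+ 2).

(* d_{ij} = d(x_i, x_j)^alpha ; points indexed by nat (only 1..n used) *)
Definition dd (R : realType) (alpha : R) (x : nat -> R * R) (i j : nat) : R :=
  powR (edist (x i) (x j)) alpha.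

Definition msn_feasible (k i : nat) (t : k.-tuple 'I_i.+1) : bool :=
  sorted ltn (map val t) && all (fun j : 'I_i.+1 => 0 < val j)%N t.

Definition msn_obj (R : realType) (alpha : R) (x : nat -> R * R) (k i : nat)
  (t : k.-tuple 'I_i.+1) : R :=
  \sum_(j < k.-1) dd alpha x (nth 0%N (map val t) j) (nth 0%N (map val t) j.+1).

(* C^{MSN}_{k,i}: maximum of the objective over feasible choices.
   All objective values are >= 0, so seeding the max with 0 is harmless
   whenever the feasible set is nonempty (k <= i). *)
Definition C_MSN (R : realType) (alpha : R) (x : nat -> R * R) (k i : nat) : R :=
  \big[Num.max/0]_(t : k.-tuple 'I_i.+1 | msn_feasible t) msn_obj alpha x t.

(** If the points increase in the order [≺], then moving the endpoints of a
    pair [x_a, x_b] outwards along the chain widens both coordinate gaps, so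
    [d_{a,b} <= d_{a',b'}] whenever [a' <= a <= b <= b'].  For [k = 2] this
    gives the pair [(1, i)] at once.  For [k > 2], an admissible chain ending
    at [a <= i] splits into a [(k-1)]-chain ending at some [j < a] plus the
    jump [d_{j,a} <= d_{j,i}]; conversely an optimal [(k-1)]-chain among
    [x_1, ..., x_j] ends at some [j' <= j] and extends by [i], the last jump
    [d_{j',i}] dominating [d_{j,i}]. *)

From Pilot Require Import Defs.
From HB Require Import structures.
From mathcomp Require Import all_boot all_order all_algebra.
From mathcomp Require Import all_classical all_reals all_analysis.
From mathcomp Require Import zify lra.
Set Implicit Arguments. Unset Strict Implicit. Unset Printing Implicit Defensive.
Import Order.TTheory GRing.Theory Num.Theory.
Local Open Scope ring_scope.

Definition wprec (R : realType) (y z : R * R) : Prop := y.1 <= z.1 /\ z.2 <= y.2.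

Lemma prec_wprec (R : realType) (y z : R * R) : prec y z -> wprec y z.
Proof. by case=> h1 h2; split; apply: ltW. Qed.

(* Qualified: the analysis library exports another [edist]. *)
Lemma edist_le_wprec (R : realType) (a' a b b' : R * R) :
  wprec a' a -> wprec a b -> wprec b b' -> Defs.edist a b <= Defs.edist a' b'.
Proof.
move=> [? ?] [? ?] [? ?]; apply: ler_wsqrtr; apply: lerD; nra.
Qed.

Section MonotoneDistances.
Variables (R : realType) (alpha : R) (n : nat) (x : nat -> R * R).
Hypothesis alpha_gt0 : 0 < alpha.
Hypothesis x_chain :
  forall i j : nat, (1 <= i)%N -> (i < j)%N -> (j <= n)%N -> prec (x i) (x j).

Lemma chain_wprec u v : (1 <= u)%N -> (u <= v)%N -> (v <= n)%N -> wprec (x u) (x v).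
Proof.
move=> u1; rewrite leq_eqVlt => /orP[/eqP-> _|uv vn]; first by split.
exact/prec_wprec/x_chain.
Qed.

Lemma dd_le a' a b b' :
  (1 <= a' <= a)%N -> (a <= b <= b')%N -> (b' <= n)%N ->
  dd alpha x a b <= dd alpha x a' b'.
Proof.
move=> /andP[a'1 a'a] /andP[ab bb'] b'n.
apply: (ge0_ler_powR (ltW alpha_gt0)); rewrite ?nnegrE ?sqrtr_ge0 //.
by apply: edist_le_wprec; apply: chain_wprec; lia.
Qed.

End MonotoneDistances.

(* Feasible chains as plain sequences of naturals, instead of the tuples of
   ordinals used by [msn_feasible]. *)
Definition msn_seq (k i : nat) (s : seq nat) : bool :=
  [&& size s == k, sorted ltn s & all (fun a => 0 < a <= i)%N s].

Lemma msn_seq_iota k i : (k <= i)%N -> msn_seq k i (iota 1 k).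
Proof.
move=> ki; rewrite /msn_seq size_iota eqxx iota_ltn_sorted /=.
by apply/allP => a; rewrite mem_iota => /andP[h1 h2]; apply/andP; split; lia.
Qed.

Lemma sorted_ltn_le_last (s : seq nat) : sorted ltn s -> all (leq^~ (last 0%N s)) s.
Proof.
case: s => [//|y s] /=; elim: s y => [|z s IH] y /=; first by rewrite leqnn.
case/andP=> yz /IH /= /andP[zl ->]; rewrite zl !andbT; lia.
Qed.

Lemma msn_seq_last_le k i s : msn_seq k i s -> (last 0 s <= i)%N.
Proof.
case: s => [//|y s] /and3P[_ _ /allP al].
by case/andP: (al _ (mem_last y s)).
Qed.

Lemma msn_seq_size_le_last k i s : msn_seq k i s -> (k <= last 0 s)%N.
Proof.
case/and3P=> /eqP <- so /allP al; case: s so al => [//|y s] /= ys al.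
have /andP[y0 _] := al y (mem_head _ _).
suff : (y + size s <= last y s)%N by lia.
elim: s y ys {y0 al} => [|z s IH] y /=; first by rewrite addn0.
by case/andP=> yz /IH zs; lia.
Qed.

Lemma msn_seq_neq_nil k i s : (0 < k)%N -> msn_seq k i s -> s != [::].
Proof. by move=> k0 /and3P[/eqP sz _ _]; rewrite -size_eq0 sz -lt0n. Qed.

Lemma msn_seq_rcons k j i s a :
  msn_seq k j s -> (j < a <= i)%N -> msn_seq k.+1 i (rcons s a).
Proof.
move=> sv /andP[ja ai]; have sl := msn_seq_last_le sv.
case/and3P: sv => /eqP sz so /allP al.
rewrite /msn_seq size_rcons sz eqxx all_rcons /=; apply/and3P; split.
- case: s so sl {al sz} => [//|y s] /=; rewrite rcons_path => -> /=; lia.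
- lia.
- by apply/allP => b /al /andP[b0 bj]; apply/andP; split; lia.
Qed.

Lemma msn_seq_rconsE k i s a :
  msn_seq k.+1 i (rcons s a) -> msn_seq k (last 0%N s) s /\ (last 0%N s < a <= i)%N.
Proof.
rewrite /msn_seq size_rcons eqSS all_rcons => /and3P[sz so /andP[/andP[a0 ai] al]].
have [so' la] : sorted ltn s /\ (last 0%N s < a)%N.
  by case: s so {sz al} => [//|y s] /=; rewrite rcons_path => /andP[].
have /allP sl := sorted_ltn_le_last so'.
rewrite sz so' la ai; split=> //; apply/allP => b bs.
by case/andP: (allP al b bs) => -> _; exact: sl.
Qed.

Section Dispersion.
Variables (R : realType) (alpha : R) (x : nat -> R * R).

Definition msn_seq_obj (s : seq nat) : R :=
  \sum_(j < (size s).-1) dd alpha x (nth 0%N s j) (nth 0%N s j.+1).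

Lemma msn_seq_obj_rcons s a : s != [::] ->
  msn_seq_obj (rcons s a) = msn_seq_obj s + dd alpha x (last 0%N s) a.
Proof.
case: s => [//|y s] _; rewrite /msn_seq_obj size_rcons /= big_ord_recr /=.
congr (_ + _).
  apply: eq_bigr => j _; have := ltn_ord j.
  by rewrite -!rcons_cons !nth_rcons /= => hj; rewrite ifT ?ifT //; lia.
by rewrite -rcons_cons !nth_rcons /= ltnSn ltnn eqxx (nth_last 0%N (y :: s)).
Qed.

Lemma msn_obj_val k i (t : k.-tuple 'I_i.+1) :
  msn_obj alpha x t = msn_seq_obj (map val t).
Proof. by rewrite /msn_seq_obj size_map size_tuple. Qed.

Lemma msn_feasible_val k i (t : k.-tuple 'I_i.+1) :
  msn_feasible t -> msn_seq k i (map val t).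
Proof.
case/andP=> so /allP al; rewrite /msn_seq size_map size_tuple eqxx so all_map.
by apply/allP => a ain /=; rewrite al //= -ltnS ltn_ord.
Qed.

Lemma msn_seq_tuple k i s : msn_seq k i s ->
  exists2 t : k.-tuple 'I_i.+1, msn_feasible t & map val t = s.
Proof.
case/and3P=> /eqP sz so /allP al.
have sz' : size (map (@inord i) s) == k by rewrite size_map sz.
have valK : map val (map (@inord i) s) = s.
  rewrite -map_comp map_id_in // => a /al /andP[_ ai] /=.
  by rewrite inordK.
exists (Tuple sz') => //; rewrite /msn_feasible /= valK so /=.
by apply/allP => a /= /mapP[b /al /andP[b0 bi] ->]; rewrite inordK.
Qed.

Lemma C_MSN_ge0 k i : 0 <= C_MSN alpha x k i.
Proof. exact: bigmax_ge_id. Qed.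

Lemma C_MSN_le k i V : 0 <= V ->
  (forall s, msn_seq k i s -> msn_seq_obj s <= V) -> C_MSN alpha x k i <= V.
Proof.
move=> V0 objV; apply: bigmax_le => // t ft.
by rewrite msn_obj_val; apply/objV/msn_feasible_val.
Qed.

Lemma msn_seq_obj_le_C_MSN k i s :
  msn_seq k i s -> msn_seq_obj s <= C_MSN alpha x k i.
Proof.
by case/msn_seq_tuple=> t ft <-; rewrite -msn_obj_val; apply: le_bigmax_cond.
Qed.

Lemma C_MSN_attained k i : (k <= i)%N ->
  exists2 s, msn_seq k i s & C_MSN alpha x k i = msn_seq_obj s.
Proof.
move=> /msn_seq_iota /msn_seq_tuple[t0 ft0 _].
rewrite /C_MSN; have [|t ft ->] := @eq_bigmax _ _ _ 0 t0 _ (@msn_obj R alpha x k i) ft0.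
  by move=> t _; apply: sumr_ge0 => j _; exact: powR_ge0.
by exists (map val t); [exact: msn_feasible_val | rewrite msn_obj_val].
Qed.

Variable n : nat.
Hypothesis alpha_gt0 : 0 < alpha.
Hypothesis x_chain :
  forall i j : nat, (1 <= i)%N -> (i < j)%N -> (j <= n)%N -> prec (x i) (x j).

Lemma C_MSN_2 i : (2 <= i <= n)%N -> C_MSN alpha x 2 i = dd alpha x 1 i.
Proof.
move=> /andP[i2 iN]; apply/le_anti/andP; split.
  apply: C_MSN_le; first exact: powR_ge0.
  case=> [|a [|b [|? ?]]] // /and3P[_ /= /andP[ab _] /and3P[/andP[a0 _] /andP[_ bi] _]].
  by rewrite /msn_seq_obj big_ord1 /=; apply: (dd_le alpha_gt0 x_chain); lia.
have v : msn_seq 2 i [:: 1%N; i] by rewrite /msn_seq /=; apply/and4P; split; lia.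
by have := msn_seq_obj_le_C_MSN v; rewrite /msn_seq_obj big_ord1.
Qed.

Section Recursion.
Variables k i : nat.
Hypotheses (k_gt0 : (0 < k)%N) (iN : (i <= n)%N).

Lemma C_MSN_le_rec :
  C_MSN alpha x k.+1 i <= \big[Num.max/0]_(k <= j < i) (C_MSN alpha x k j + dd alpha x j i).
Proof.
apply: C_MSN_le; first exact: bigmax_ge_id.
case/lastP=> [/and3P[/eqP //]|s a /msn_seq_rconsE[sv /andP[ja ai]]].
have kj := msn_seq_size_le_last sv.
have s0 := msn_seq_neq_nil k_gt0 sv.
rewrite msn_seq_obj_rcons //.
set F := fun j => C_MSN alpha x k j + dd alpha x j i.
apply: (le_trans _ (le_bigmax_seq 0 (last 0%N s) xpredT F _ _)) => //;
  last by rewrite mem_index_iota; lia.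
apply: lerD; first exact: msn_seq_obj_le_C_MSN.
by apply: (dd_le alpha_gt0 x_chain); lia.
Qed.

Lemma C_MSN_ge_rec :
  \big[Num.max/0]_(k <= j < i) (C_MSN alpha x k j + dd alpha x j i) <= C_MSN alpha x k.+1 i.
Proof.
rewrite big_seq_cond; apply: bigmax_le; first exact: C_MSN_ge0.
move=> j /andP[]; rewrite mem_index_iota => /andP[kj ji] _.
have [s sv ->] := C_MSN_attained kj.
have ks := msn_seq_size_le_last sv; have sj := msn_seq_last_le sv.
have s0 := msn_seq_neq_nil k_gt0 sv.
have /msn_seq_obj_le_C_MSN : msn_seq k.+1 i (rcons s i).
  by apply: msn_seq_rcons sv _; lia.
rewrite msn_seq_obj_rcons //; apply: le_trans; apply: lerD => //.
by apply: (dd_le alpha_gt0 x_chain); lia.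
Qed.

End Recursion.

End Dispersion.

Theorem proposition8 (R : realType) (alpha : R) (n p : nat) (x : nat -> R * R)
  (halpha : 0 < alpha) (hp : (2 <= p)%N)
  (hx : forall i j : nat, (1 <= i)%N -> (i < j)%N -> (j <= n)%N -> prec (x i) (x j)) :
  (forall i : nat, (2 <= i <= n)%N -> C_MSN alpha x 2 i = dd alpha x 1 i) /\
  (forall k i : nat, (3 <= k <= p)%N -> (k <= i <= n)%N ->
     C_MSN alpha x k i =
     \big[Num.max/0]_(k.-1 <= j < i) (C_MSN alpha x k.-1 j + dd alpha x j i)).
Proof.
split; first exact: C_MSN_2 halpha hx.
move=> [//|k] i /andP[k3 _] /andP[_ iN] /=.
have k0 : (0 < k)%N by case: k k3.
by apply/le_anti; rewrite (C_MSN_le_rec halpha hx k0 iN) (C_MSN_ge_rec halpha hx k0 iN).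
Qed.
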